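(* Let $0<\lambda<n$ and $1\le p<\infty$. There exist functions $f\in V_0L^{p,\lambda}\cap V_\infty L^{p,\lambda}$ which do not satisfy $\lim_{N\to\infty}\sup_{x\in\mathbb{R}^n}\int_{B(x,1)}|f(y)|^p\chi_{\mathbb{R}^n\setminus B(0,N)}(y)\,dy=0$.
   Context: $B(x,r)$ is the open ball in $\mathbb{R}^n$ with center $x$ and radius $r$. For $f\in L^1_{\mathrm{loc}}(\mathbb{R}^n)$ let $\mathfrak{M}_{p,\lambda}(f;x,r):=r^{-\lambda}\int_{B(x,r)}|f(y)|^p\,dy$. The homogeneous Morrey space $L^{p,\lambda}(\mathbb{R}^n)$ consists of $f\in L^p_{\mathrm{loc}}(\mathbb{R}^n)$ with $\|f\|_{p,\lambda}:=\sup_{x\in\mathbb{R}^n,\,r>0}\mathfrak{M}_{p,\lambda}(f;x,r)^{1/p}<\infty$. $V_0L^{p,\lambda}=\{f\in L^{p,\lambda}:\lim_{r\to0}\sup_{x}\mathfrak{M}_{p,\lambda}(f;x,r)=0\}$ and $V_\infty L^{p,\lambda}=\{f\in L^{p,\lambda}:\lim_{r\to\infty}\sup_{x}\mathfrak{M}_{p,\lambda}(f;x,r)=0\}$. *)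

From HB Require Import structures.
From mathcomp Require Import all_boot all_order all_algebra.
From mathcomp Require Import all_classical all_reals all_analysis.
Set Implicit Arguments. Unset Strict Implicit. Unset Printing Implicit Defensive.
Import Order.TTheory GRing.Theory Num.Theory.
Import numFieldNormedType.Exports.
Local Open Scope classical_set_scope.
Local Open Scope ring_scope.

(* Euclidean space R^(k+1) realised as the iterated product
   ((R * R) * ...) * R with the iterated product of Lebesgue measures. *)
Record EucSpace (R : realType) := {
  es_disp : measure_display;
  es_car : measurableType es_disp;
  es_mu : {measure set es_car -> \bar R};
  es_dist2 : es_car -> es_car -> R;
  es_zero : es_car }.

Fixpoint Rsp (R : realType) (k : nat) : EucSpace R :=
  match k with
  | 0 => @Build_EucSpace R _ (measurableTypeR R) (@lebesgue_measure R)
           (fun x y => (x - y) ^+ 2) 0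
  | k.+1 => let E := Rsp R k in
      @Build_EucSpace R _ _
        (product_measure1 (es_mu E) (@lebesgue_measure R) : measure _ R)
        (fun x y => @es_dist2 _ E x.1 y.1 + (x.2 - y.2) ^+ 2)
        (es_zero E, 0)
  end.

(* R^n for n >= 1 *)
Definition Rn (R : realType) (n : nat) : EucSpace R := Rsp R n.-1.

Section Morrey.
Variables (R : realType) (E : EucSpace R).
Local Notation X := (es_car E).
Local Notation mu := (es_mu E).

Definition Ball (x : X) (r : R) : set X := [set y | es_dist2 x y < r ^+ 2].

Definition origin : X := es_zero E.

Definition morreyM (p lam : R) (f : X -> R) (x : X) (r : R) : \bar R :=
  ((r `^ (- lam))%:E * \int[mu]_(y in Ball x r) ((`|f y| `^ p)%:E))%E.

Definition Lploc (p : R) (f : X -> R) : Prop :=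
  measurable_fun setT f /\
  forall x r, 0 < r -> (\int[mu]_(y in Ball x r) ((`|f y| `^ p)%:E) < +oo)%E.

Definition inMorrey (p lam : R) (f : X -> R) : Prop :=
  Lploc p f /\
  exists C : R, forall x r, 0 < r -> (morreyM p lam f x r <= C%:E)%E.

Definition supM (p lam : R) (f : X -> R) (r : R) : \bar R :=
  ereal_sup [set morreyM p lam f x r | x in [set: X]].

Definition inV0Morrey (p lam : R) (f : X -> R) : Prop :=
  inMorrey p lam f /\ supM p lam f r @[r --> 0^'+] --> 0%E.

Definition inVinfMorrey (p lam : R) (f : X -> R) : Prop :=
  inMorrey p lam f /\ supM p lam f r @[r --> +oo] --> 0%E.

Definition tailInt (p : R) (f : X -> R) (N : nat) (x : X) : \bar R :=
  \int[mu]_(y in Ball x 1)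
     ((`|f y| `^ p) * \1_(~` Ball origin N%:R) y)%:E.

Definition tailSup (p : R) (f : X -> R) (N : nat) : \bar R :=
  ereal_sup [set tailInt p f N x | x in [set: X]].

End Morrey.

From HB Require Import structures.
From mathcomp Require Import all_boot all_order all_algebra.
From mathcomp Require Import all_classical all_reals all_analysis.
From mathcomp Require Import measurable_realfun lra.
Set Implicit Arguments. Unset Strict Implicit.
Import Order.TTheory GRing.Theory Num.Theory.
Local Open Scope classical_set_scope.
Local Open Scope ring_scope.

(* The witness is the indicator of S = A x [0,1]^(n-1), where A is a union of
   unit blocks [a_m, a_m + 1] followed by gaps of length (a_m + 1)^K, with K
   chosen so that 1/K < lambda. A ball of radius r meets S in measure at most
   (2r)^n, which kills r^(-lambda) |B(x,r) /\ S| as r -> 0 since lambda < n.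
   A window of length 2r meeting two blocks contains a whole gap, so the blocks
   it meets before the last one have total length at most (2r)^(1/K); hence
   |B(x,r) /\ S| <= 1 + (2r)^(1/K), which kills r^(-lambda) |B(x,r) /\ S| as
   r -> oo since 1/K < lambda. Yet every block, however far out, contains a
   cube of fixed size lying in a unit ball, so the tails do not vanish. *)

Section EuclideanGeometry.
Variable R : realType.
Local Notation X k := (es_car (Rsp R k)).
Local Notation mu k := (es_mu (Rsp R k)).

Fixpoint coord0 (k : nat) : X k -> R :=
  match k return X k -> R with
  | 0 => fun x => x
  | k'.+1 => fun x => @coord0 k' x.1
  end.

Fixpoint slab (A : set R) (k : nat) : set (X k) :=
  match k return set (X k) with
  | 0 => A
  | k'.+1 => @slab A k' `*` `[0, 1]%classic
  end.

Fixpoint cube (k : nat) : X k -> R -> set (X k) :=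
  match k return X k -> R -> set (X k) with
  | 0 => fun x d => `](x - d), (x + d)[%classic
  | k'.+1 => fun x d => @cube k' x.1 d `*` `](x.2 - d), (x.2 + d)[%classic
  end.

Fixpoint slab_center (k : nat) (c : R) : X k :=
  match k return X k with
  | 0 => c
  | k'.+1 => (@slab_center k' c, 2^-1)
  end.

Arguments slab : clear implicits.

Lemma dist2_ge0 k (x y : X k) : 0 <= es_dist2 x y.
Proof. by elim: k x y => [|k IH] x y /=; rewrite ?addr_ge0 ?sqr_ge0. Qed.

Lemma coord0_dist2_le k (x y : X k) : (coord0 x - coord0 y) ^+ 2 <= es_dist2 x y.
Proof.
elim: k x y => [|k IH] x y //=.
by apply: le_trans (IH _ _) _; rewrite lerDl sqr_ge0.
Qed.

Lemma coord0_origin k : coord0 (origin (Rsp R k)) = 0.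
Proof. by elim: k. Qed.

Lemma coord0_slab_center k c : coord0 (slab_center k c) = c.
Proof. by elim: k. Qed.

Lemma measurable_dist2 k (x : X k) : measurable_fun setT (es_dist2 x).
Proof.
elim: k x => [|k IH] x /=; first exact/measurable_funX/measurable_funB.
apply: measurable_funD; first exact: measurableT_comp (IH x.1) measurable_fst.
exact/measurable_funX/measurable_funB.
Qed.

Lemma measurable_Ball k (x : X k) r : measurable (Ball x r).
Proof.
have := measurable_dist2 x measurableT (measurable_itv `]-oo, (r ^+ 2)[).
by rewrite setTI; congr measurable; apply/seteqP; split => y /=; rewrite in_itv.
Qed.

Lemma measurable_slab A k : measurable A -> measurable (slab A k).
Proof. by move=> mA; elim: k => [|k IH] //=; exact: measurableX. Qed.

Lemma measurable_cube k (x : X k) d : measurable (cube x d).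
Proof.
by elim: k x => [|k IH] x /=; [exact: measurable_itv | exact: measurableX].
Qed.

Lemma lebesgue_measure_itv_oo (c d : R) : 0 <= d ->
  lebesgue_measure `](c - d), (c + d)[%classic = (d *+ 2)%:E.
Proof. by move=> d0; rewrite -ball_itv lebesgue_measure_ball. Qed.

Lemma lebesgue_measure_itv_cc (a b : R) : a <= b ->
  lebesgue_measure `[a, b]%classic = (b - a)%:E.
Proof.
rewrite le_eqVlt => /predU1P[<-|ab]; last by rewrite lebesgue_measure_itv /= lte_fin ab.
by rewrite set_itv1 lebesgue_measure_set1 subrr.
Qed.

Lemma lebesgue_measureI_itv_oo_le (A : set R) c d : measurable A -> 0 <= d ->
  (lebesgue_measure (A `&` `](c - d)%R, (c + d)%R[) <= (d *+ 2)%:E)%E.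
Proof.
move=> mA d0; have mI := measurable_itv `](c - d), (c + d)[.
have := le_measure (@lebesgue_measure R) (mem_set (measurableI A _ mA mI))
  (mem_set mI) (@subIsetr _ A _).
move=> /le_trans; apply; rewrite [Z in (Z <= _)%E](_ : _ = (d *+ 2)%:E) //.
exact: lebesgue_measure_itv_oo.
Qed.

Lemma cube_measure k (x : X k) d : 0 <= d ->
  mu k (cube x d) = ((d *+ 2) ^+ k.+1)%:E.
Proof.
move=> d0; elim: k x => [|k IH] x /=; first exact: lebesgue_measure_itv_oo.
rewrite product_measure1E ?IH; [|exact: measurable_cube|exact: measurable_itv].
by rewrite [in RHS]exprSr EFinM; congr (_ * _)%E; exact: lebesgue_measure_itv_oo.
Qed.

Lemma cube_sub_Ball k (x : X k) d r : 0 < d -> k.+1%:R * d <= r ->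
  cube x d `<=` Ball x r.
Proof.
move=> d0 dr y xy; rewrite /Ball /=.
suff : es_dist2 x y < k.+1%:R * d ^+ 2.
  have n1 : 1 <= k.+1%:R :> R by rewrite ler1n.
  have : k.+1%:R * d ^+ 2 <= (k.+1%:R * d) ^+ 2 by nra.
  have : (k.+1%:R * d) ^+ 2 <= r ^+ 2 by rewrite ler_sqr ?nnegrE; nra.
  lra.
elim: k x y xy {dr} => [|k IH] x y /=.
  by rewrite in_itv /= mul1r => /andP[? ?]; nra.
move=> [/IH h1]; rewrite in_itv /= => /andP[? ?].
rewrite -natr1 mulrDl mul1r ltrD //; nra.
Qed.

Lemma coord0_cube k (x : X k) d y : cube x d y -> coord0 x - d < coord0 y.
Proof.
elim: k x y => [|k IH] x y /=; first by rewrite in_itv /= => /andP[].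
by move=> [/IH].
Qed.

Lemma cube_sub_slab k A c d : 0 < d -> d <= 2^-1 ->
  `](c - d), (c + d)[%classic `<=` A -> cube (slab_center k c) d `<=` slab A k.
Proof.
move=> d0 d1 cA; elim: k => [|k IH] //= y [/IH h1] /=.
by rewrite !in_itv /= => /andP[? ?]; split => //; apply/andP; split; lra.
Qed.

Lemma Ball_coord0 k (x y : X k) r : 0 <= r -> Ball x r y ->
  coord0 x - r < coord0 y < coord0 x + r.
Proof.
move=> r0; rewrite /Ball /= => xy.
have := coord0_dist2_le x y => h; apply/andP; split; nra.
Qed.

Lemma Ball_slabS_sub k A (x : X k.+1) r : 0 <= r ->
  Ball x r `&` slab A k.+1 `<=`
  (Ball x.1 r `&` slab A k) `*` (`[0, 1]%classic `&` `](x.2 - r), (x.2 + r)[%classic).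
Proof.
move=> r0 y [xy [y1A y2I]]; rewrite /Ball /= in xy.
have := dist2_ge0 x.1 y.1; have := sqr_ge0 (x.2 - y.2) => ? ?.
split; split => //; first by rewrite /Ball /=; lra.
by rewrite /= in_itv /=; apply/andP; split; nra.
Qed.

Lemma measure_Ball_slab_le k A (x : X k) r w : measurable A -> 0 <= r ->
  (forall t, lebesgue_measure (`[0%R, 1%R] `&` `](t - r)%R, (t + r)%R[) <= w%:E)%E ->
  (mu k (Ball x r `&` slab A k) <=
   lebesgue_measure (A `&` `](coord0 x - r)%R, (coord0 x + r)%R[) * (w ^+ k)%:E)%E.
Proof.
move=> mA r0 hw; elim: k x => [|k IH] x.
  rewrite expr0 mule1; apply: le_measure; rewrite ?inE.
  - by apply: measurableI => //; have := @measurable_Ball 0 x r.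
  - exact: measurableI mA (measurable_itv _).
  by move=> y [/(Ball_coord0 r0) xy Ay]; split => //=; rewrite in_itv.
have mI : measurable (`[0%R, 1%R] `&` `](x.2 - r)%R, (x.2 + r)%R[ : set R).
  exact: measurableI (measurable_itv _) (measurable_itv _).
have mBS : measurable (Ball x.1 r `&` slab A k).
  by apply: measurableI; [have := @measurable_Ball k x.1 r | exact: measurable_slab].
apply: (@le_trans _ _ (mu k (Ball x.1 r `&` slab A k) *
   lebesgue_measure (`[0%R, 1%R] `&` `](x.2 - r)%R, (x.2 + r)%R[))%E).
  rewrite -product_measure1E //; apply: le_measure; rewrite ?inE.
  - apply: measurableI; first by have := @measurable_Ball k.+1 x r.
    exact: measurable_slab.
  - exact: measurableX.
  exact: Ball_slabS_sub.
rewrite exprSr EFinM muleA.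
by apply: lee_pmul.
Qed.

End EuclideanGeometry.

Arguments slab {R} A k.

Section SparseBlocks.
Variables (R : realType) (K : nat).
Hypothesis K_gt0 : (0 < K)%N.

Fixpoint block_start (m : nat) : R :=
  if m is m'.+1 then block_start m' + 1 + (block_start m' + 1) ^+ K else 0.

Arguments block_start : simpl never.

Lemma block_startS m :
  block_start m.+1 = block_start m + 1 + (block_start m + 1) ^+ K.
Proof. by []. Qed.

Definition blocks : set R :=
  \bigcup_m `[block_start m, block_start m + 1]%classic.

Lemma block_start_ge0 m : 0 <= block_start m.
Proof.
by elim: m => [|m IH] //; rewrite block_startS !addr_ge0 ?exprn_ge0 ?addr_ge0.
Qed.

Lemma block_start_gap m : block_start m + 1 < block_start m.+1.
Proof.
by rewrite block_startS ltrDl exprn_gt0 // ltr_pwDr ?block_start_ge0.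
Qed.

Lemma block_start_nondecreasing : nondecreasing_seq block_start.
Proof.
by apply/nondecreasing_seqP => m; have := block_start_gap m; lra.
Qed.

Lemma block_start_ge_nat m : m%:R <= block_start m.
Proof.
by elim: m => [|m IH] //; have := block_start_gap m; rewrite -natr1; lra.
Qed.

Lemma measurable_blocks : measurable blocks.
Proof. by apply: bigcup_measurable => m _; exact: measurable_itv. Qed.

Lemma blocks_ge0 y : blocks y -> 0 <= y.
Proof.
move=> [j _] /=; rewrite in_itv /= => /andP[+ _].
exact/le_trans/block_start_ge0.
Qed.

Lemma blocks_le_of_lt M y : blocks y -> y < block_start M.+1 ->
  y <= block_start M + 1.
Proof.
move=> [j _] + yaM; rewrite /= in_itv /= => /andP[ajy yaj].
have [jM|Mj] := leqP j M.
  by have := block_start_nondecreasing jM; lra.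
by have := block_start_nondecreasing Mj; lra.
Qed.

Lemma block_start_locate t :
  t < block_start 1 \/ exists M, block_start M.+1 <= t < block_start M.+2.
Proof.
have [N tN] : exists N, t < block_start N.
  have [t0|t0] := ltrP t 0; first by exists 0%N.
  exists (Num.Def.archi_bound t).
  exact: lt_le_trans (archi_boundP t0) (block_start_ge_nat _).
elim: N tN => [|N IH] tN; first by left; have := block_start_gap 0; lra.
have [tN'|Nt] := ltrP t (block_start N); first exact: IH.
case: N {IH} tN Nt => [|N] tN Nt; first by left.
by right; exists N; rewrite Nt tN.
Qed.

Lemma ler_powR_invn (s u : R) : 0 <= s -> s ^+ K <= u -> s <= u `^ K%:R^-1.
Proof.
move=> s0 su.
have -> : s = (s ^+ K) `^ K%:R^-1.
  by rewrite -powR_mulrn // -powRrM mulfV ?powRr1 // pnatr_eq0 -lt0n.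
by apply: ge0_ler_powR; rewrite ?invr_ge0 ?ler0n ?nnegrE ?exprn_ge0 //;
  apply: le_trans su; rewrite exprn_ge0.
Qed.

Lemma blocks_window_sub c r : 0 < r -> exists M s,
  0 <= s <= (r *+ 2) `^ K%:R^-1 /\
  blocks `&` `](c - r), (c + r)[%classic `<=`
  `[0, s]%classic `|` `[block_start M, block_start M + 1]%classic.
Proof.
move=> r0; have p0 : 0 <= (r *+ 2) `^ K%:R^-1 := powR_ge0 _ _.
case: (block_start_locate (c + r)) => [ca1|[M /andP[aMc caM]]].
  exists 0%N, 0; split; first by rewrite lexx.
  move=> y [By]; rewrite /= !in_itv /= => /andP[_ yc]; right.
  by rewrite blocks_ge0 // blocks_le_of_lt //; lra.
have [aMc'|caM'] := ltrP (block_start M + 1) (c - r).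
  exists M.+1, 0; split; first by rewrite lexx.
  move=> y [By]; rewrite /= !in_itv /= => /andP[cy yc]; right.
  have [yaM|_] := ltrP y (block_start M.+1).
    by have := blocks_le_of_lt By yaM; lra.
  by rewrite blocks_le_of_lt //; lra.
exists M.+1, (block_start M + 1); split.
  apply/andP; split; first by have := block_start_ge0 M; lra.
  apply: ler_powR_invn; first by have := block_start_ge0 M; lra.
  by move: caM' aMc; rewrite block_startS mulr2n; lra.
move=> y [By]; rewrite /= !in_itv /= => /andP[cy yc].
have [yaM|_] := ltrP y (block_start M.+1).
  by left; rewrite blocks_ge0 // blocks_le_of_lt.
by right; rewrite blocks_le_of_lt //; lra.
Qed.

Lemma blocks_window_le c r : 0 < r ->
  (lebesgue_measure (blocks `&` `](c - r)%R, (c + r)%R[) <=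
   (1 + (r *+ 2) `^ K%:R^-1)%:E)%E.
Proof.
move=> r0; have [M [s [/andP[s0 sr] sub]]] := blocks_window_sub c r0.
have mI : measurable (blocks `&` `](c - r)%R, (c + r)%R[).
  exact: measurableI measurable_blocks (measurable_itv _).
have mU : measurable
    (`[0%R, s] `|` `[block_start M, block_start M + 1%R] : set R).
  exact: measurableU (measurable_itv _) (measurable_itv _).
have := le_measure (@lebesgue_measure R) (mem_set mI) (mem_set mU) sub.
move=> /le_trans; apply.
have := measureU2 (@lebesgue_measure R) (measurable_itv `[0, s])
  (measurable_itv `[block_start M, block_start M + 1]).
move=> /le_trans; apply.
rewrite [Z in (Z + _)%E](_ : _ = s%:E); last first.
  by apply: eq_trans (lebesgue_measure_itv_cc s0) _; rewrite subr0.
rewrite [Z in (_ + Z)%E](_ : _ = 1%:E); last first.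
  have aM1 : block_start M <= block_start M + 1 by rewrite lerDl.
  by apply: eq_trans (lebesgue_measure_itv_cc aM1) _; rewrite addrAC subrr add0r.
by rewrite -EFinD lee_fin; lra.
Qed.

End SparseBlocks.

Arguments block_start {R} K m : simpl never.

Lemma powRN_cvg0_pinfty (R : realType) (e : R) : 0 < e ->
  r `^ (- e) @[r --> +oo] --> 0.
Proof.
move=> e0; apply/cvgr0Pnorm_le => eps eps0.
exists (eps `^ (- e^-1)); split; first exact: num_real.
move=> r epsr; have r0 : 0 < r by exact: lt_trans (powR_gt0 _ _) epsr.
rewrite ger0_norm ?powR_ge0 // powRN -[leRHS]invrK lef_pV2 ?posrE ?invr_gt0 ?powR_gt0 //.
have <- : (eps `^ (- e^-1)) `^ e = eps^-1.
  by rewrite -powRrM mulNr mulVf ?gt_eqF // powR_inv1 // ltW.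
by apply: ge0_ler_powR; rewrite ?nnegrE ?powR_ge0 ?(ltW e0) ?(ltW r0) ?(ltW epsr).
Qed.

Lemma not_cvg0_of_ge (R : realType) (u : nat -> \bar R) (c : R) : 0 < c ->
  (forall N, c%:E <= u N)%E -> ~ (u @ \oo --> 0%E).
Proof.
move=> c0 cu u0; have : (c%:E <= limn u)%E.
  by apply: lime_ge; [exact: cvgP u0 | exact: nearW].
by rewrite (cvg_lim _ u0) // lee_fin leNgt c0.
Qed.

Section MorreyGeneral.
Variables (R : realType) (E : EucSpace R) (p lam : R).
Local Notation X := (es_car E).

Lemma morreyM_ge0 (f : X -> R) x r : (0 <= morreyM p lam f x r)%E.
Proof.
rewrite /morreyM mule_ge0 ?lee_fin ?powR_ge0 //.
by apply: integral_ge0 => y _; rewrite lee_fin powR_ge0.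
Qed.

Lemma supM_cvg0 (F : set_system R) {FF : ProperFilter F} (f : X -> R) (h : R -> R) :
  (\forall r \near F, forall x, (morreyM p lam f x r <= (h r)%:E)%E) ->
  h r @[r --> F] --> 0 -> supM p lam f r @[r --> F] --> 0%E.
Proof.
move=> fh h0; apply: (@squeeze_cvge _ _ _ _ (fun=> 0%E) _ (fun r => (h r)%:E)).
- apply: filterS fh => r fhr; apply/andP; split.
    apply: le_trans (morreyM_ge0 f (origin E) r) _.
    by apply: ereal_sup_ubound; exists (origin E).
  by apply: ge_ereal_sup => _ [x _ <-]; exact: fhr.
- exact: cvg_cst.
- apply: cvg_EFin; first exact: nearW.
  exact: h0.
Qed.

End MorreyGeneral.

Section Indicator.
Variables (R : realType) (k : nat) (p : R).
Hypothesis p_neq0 : p != 0.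
Local Notation X := (es_car (Rsp R k)).
Local Notation mu := (es_mu (Rsp R k)).

Lemma powR_norm_indic (S : set X) y : `|\1_S y| `^ p = \1_S y.
Proof. by rewrite indicE; case: (y \in S); rewrite ?normr1 ?powR1 ?normr0 ?powR0. Qed.

Lemma integral_Ball_indic (S : set X) x r : measurable S ->
  (\int[mu]_(y in Ball x r) (`|\1_S y| `^ p)%:E = mu (Ball x r `&` S))%E.
Proof.
move=> mS; under eq_integral do rewrite powR_norm_indic.
by rewrite integral_indic 1?setIC //; exact: measurable_Ball.
Qed.

Lemma morreyM_indic (S : set X) lam x r : measurable S ->
  morreyM p lam \1_S x r = ((r `^ (- lam))%:E * mu (Ball x r `&` S))%E.
Proof. by move=> mS; rewrite /morreyM integral_Ball_indic. Qed.

Lemma tailInt_indic (S : set X) N x : measurable S ->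
  tailInt p \1_S N x = mu (Ball x 1 `&` (S `&` ~` Ball (origin _) N%:R)).
Proof.
move=> mS; rewrite /tailInt.
rewrite (eq_integral (fun y => (\1_(S `&` ~` Ball (origin _) N%:R) y)%:E)); last first.
  by move=> y _; rewrite indicI /= powR_norm_indic.
rewrite integral_indic 1?setIC //; first exact: measurable_Ball.
by apply: measurableI => //; apply: measurableC; exact: measurable_Ball.
Qed.

End Indicator.

Section SparseSlab.
Variables (R : realType) (k K : nat) (lam p : R).
Hypotheses (K_gt0 : (0 < K)%N) (invK_lt_lam : K%:R^-1 < lam)
  (lam_lt_dim : lam < k.+1%:R) (p_neq0 : p != 0).
Local Notation X := (es_car (Rsp R k)).
Local Notation mu := (es_mu (Rsp R k)).

Let sparse : set X := slab (blocks K) k.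

Let measurable_sparse : measurable sparse.
Proof. by apply: measurable_slab; exact: measurable_blocks. Qed.

Let lam_gt0 : 0 < lam.
Proof. by apply: lt_trans invK_lt_lam; rewrite invr_gt0 ltr0n. Qed.

Lemma measure_Ball_sparse_small (x : X) r : 0 < r ->
  (mu (Ball x r `&` sparse) <= ((r *+ 2) ^+ k.+1)%:E)%E.
Proof.
move=> r0; have itv_le (A : set R) t (mA : measurable A) :=
  lebesgue_measureI_itv_oo_le t mA (ltW r0).
have := measure_Ball_slab_le x (measurable_blocks K) (ltW r0)
  (fun t => itv_le _ t (measurable_itv `[0, 1])).
move=> /le_trans; apply.
rewrite exprS EFinM; apply: lee_wpmul2r.
  by rewrite lee_fin exprn_ge0 // mulrn_wge0 // ltW.
exact: itv_le _ _ (measurable_blocks K).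
Qed.

Lemma measure_Ball_sparse_large (x : X) r : 0 < r ->
  (mu (Ball x r `&` sparse) <= (1 + (r *+ 2) `^ K%:R^-1)%:E)%E.
Proof.
move=> r0; apply: le_trans (measure_Ball_slab_le x _ (ltW r0) (w := 1) _) _.
- exact: measurable_blocks.
- move=> t; apply: le_trans (le_measure _ _ _ (@subIsetl _ _ _)) _; rewrite ?inE.
  + exact: measurableI (measurable_itv _) (measurable_itv _).
  + exact: measurable_itv.
  rewrite [Z in (Z <= _)%E](_ : _ = 1%:E) //.
  by apply: eq_trans (lebesgue_measure_itv_cc ler01) _; rewrite subr0.
by rewrite expr1n mule1; exact: blocks_window_le.
Qed.

Let small_bound r := 2 ^+ k.+1 * r `^ (k.+1%:R - lam).
Let large_bound r := r `^ (- lam) + 2 `^ K%:R^-1 * r `^ (K%:R^-1 - lam).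

Lemma morreyM_sparse_le_small x r : 0 < r ->
  (morreyM p lam \1_sparse x r <= (small_bound r)%:E)%E.
Proof.
move=> r0; rewrite morreyM_indic //.
have <- : r `^ (- lam) * (r *+ 2) ^+ k.+1 = small_bound r.
  rewrite /small_bound -[r *+ 2]mulr_natl exprMn -(@powR_mulrn _ r k.+1 (ltW r0)).
  by rewrite mulrCA -powRD ?[- lam + _]addrC // (gt_eqF r0) implybT.
by rewrite EFinM lee_wpmul2l ?lee_fin ?powR_ge0 ?measure_Ball_sparse_small.
Qed.

Lemma morreyM_sparse_le_large x r : 0 < r ->
  (morreyM p lam \1_sparse x r <= (large_bound r)%:E)%E.
Proof.
move=> r0; rewrite morreyM_indic //.
have <- : r `^ (- lam) * (1 + (r *+ 2) `^ K%:R^-1) = large_bound r.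
  rewrite /large_bound mulrDr mulr1 -[r *+ 2]mulr_natl powRM ?ler0n ?ltW //.
  by rewrite mulrCA -powRD ?[- lam + _]addrC // (gt_eqF r0) implybT.
by rewrite EFinM lee_wpmul2l ?lee_fin ?powR_ge0 ?measure_Ball_sparse_large.
Qed.

Lemma small_bound_cvg0 : small_bound r @[r --> 0^'+] --> 0.
Proof.
rewrite -[Z in _ --> Z](mulr0 (2 ^+ k.+1)); apply: cvgMl_tmp.
by apply: powR_cvg0; rewrite subr_gt0.
Qed.

Lemma large_bound_cvg0 : large_bound r @[r --> +oo] --> 0.
Proof.
rewrite -[Z in _ --> Z](addr0 0) -[Z in _ --> _ + Z](mulr0 (2 `^ K%:R^-1)).
apply: cvgD; first exact: powRN_cvg0_pinfty.
apply: cvgMl_tmp.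
by rewrite -opprB; apply: powRN_cvg0_pinfty; rewrite subr_gt0.
Qed.

Lemma inMorrey_sparse : inMorrey p lam \1_sparse.
Proof.
split.
  split; first exact: measurable_indic.
  move=> x r r0; rewrite integral_Ball_indic //.
  exact: le_lt_trans (measure_Ball_sparse_small x r0) (ltry _).
exists (2 ^+ k.+1 + (1 + 2 `^ K%:R^-1)) => x r r0.
have b0 : 0 <= 1 + 2 `^ K%:R^-1 :> R by rewrite addr_ge0 ?powR_ge0.
have [r1|r1] := lerP r 1.
  apply: le_trans (morreyM_sparse_le_small x r0) _; rewrite lee_fin.
  apply: ler_wpDr => //; apply: ler_piMr; first exact: exprn_ge0.
  rewrite -[leRHS](powRr0 r); apply: ger_powR; first by rewrite r0 r1.
  by rewrite subr_ge0 ltW.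
apply: le_trans (morreyM_sparse_le_large x r0) _; rewrite lee_fin.
apply: ler_wpDl; first exact: exprn_ge0.
apply: lerD.
  rewrite -[leRHS](powRr0 r); apply: ler_powR; first exact: ltW.
  by rewrite oppr_le0 ltW.
apply: ler_piMr; first exact: powR_ge0.
rewrite -[leRHS](powRr0 r); apply: ler_powR; first exact: ltW.
by rewrite subr_le0 ltW.
Qed.

Lemma inV0Morrey_sparse : inV0Morrey p lam \1_sparse.
Proof.
split; first exact: inMorrey_sparse.
apply: supM_cvg0 small_bound_cvg0; near=> r => x.
by apply: morreyM_sparse_le_small; near: r; exact: nbhs_right_gt.
Unshelve. all: by end_near. Qed.

Lemma inVinfMorrey_sparse : inVinfMorrey p lam \1_sparse.
Proof.
split; first exact: inMorrey_sparse.
apply: supM_cvg0 large_bound_cvg0; near=> r => x.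
by apply: morreyM_sparse_le_large; near: r; exact: nbhs_pinfty_gt.
Unshelve. all: by end_near. Qed.

Let d : R := (k.+1%:R *+ 2)^-1.

Lemma tailSup_sparse_ge N : (((d *+ 2) ^+ k.+1)%:E <= tailSup p \1_sparse N)%E.
Proof.
have d0 : 0 < d by rewrite invr_gt0 mulrn_wgt0.
have kd : k.+1%:R * d = 2^-1.
  by rewrite /d -[k.+1%:R *+ 2]mulr_natr invfM mulVKf // pnatr_eq0.
have d_half : d <= 2^-1.
  by rewrite -kd; apply: ler_peMl; [exact: ltW | rewrite ler1n].
pose x0 : X := slab_center k (block_start K N + 2^-1).
apply: le_ereal_sup_tmp; exists (tailInt p \1_sparse N x0); first by exists x0.
rewrite tailInt_indic // -(cube_measure x0 (ltW d0)).
have mT : measurable (Ball x0 1 `&` (sparse `&` ~` Ball (origin _) N%:R)).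
  apply: measurableI; first exact: measurable_Ball.
  by apply: measurableI => //; apply: measurableC; exact: measurable_Ball.
apply: le_measure; rewrite ?inE //; first exact: measurable_cube.
move=> y cy; split; first by apply: (cube_sub_Ball d0 _ cy); rewrite kd; lra.
split.
  apply: cube_sub_slab cy => // t; rewrite /= in_itv /= => /andP[? ?].
  by exists N => //=; rewrite in_itv /=; apply/andP; split; lra.
move=> /(Ball_coord0 (ler0n _ N)); rewrite coord0_origin.
have := coord0_cube cy; rewrite coord0_slab_center.
by have := block_start_ge_nat R K N; lra.
Qed.

End SparseSlab.

Theorem theorem4p1 (R : realType) (n : nat) (lam p : R) :
  0 < lam -> lam < n%:R -> 1 <= p ->
  exists f : es_car (Rn R n) -> R,
    inV0Morrey p lam f /\ inVinfMorrey p lam f /\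
    ~ (tailSup p f N @[N --> \oo] --> 0%E).
Proof.
move=> lam0 lam_lt_n p1.
case: n lam_lt_n => [|k] lam_lt_dim; first by move: lam0; rewrite ltNge ltW.
have [K _ invK_lt_lam] := near_infty_natSinv_lt (PosNum lam0).
have {}invK_lt_lam := invK_lt_lam K (leqnn K).
have p_neq0 : p != 0 by rewrite gt_eqF // (lt_le_trans ltr01 p1).
exists \1_(slab (blocks K.+1) k); split; [|split].
- exact: inV0Morrey_sparse.
- exact: inVinfMorrey_sparse.
apply: not_cvg0_of_ge (tailSup_sparse_ge k K.+1 p_neq0).
by rewrite exprn_gt0 // mulrn_wgt0 // invr_gt0 mulrn_wgt0.
Qed.
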